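(* Let $(\mathbf{V}_\tau,\mathbf{A}_\tau)$ satisfy $\mathbf{1}_N^\top\mathbf{V}_\tau=\mathbf{1}_N^\top$, $\mathbf{1}_T^\top\mathbf{A}_\tau=\mathbf{1}_N^\top$, $\mathbf{V}_\tau\boldsymbol\mu=\boldsymbol\mu$, and let $\mathbf{V}_{\tau+1}=\mathbf{V}_\tau-\eta_V\mathbb{E}\hat\nabla_{\mathbf{V}}l-\eta_V\mathbf{h}_{\mathbf{V},\tau}$ and $\mathbf{A}_{\tau+1}=\mathbf{A}_\tau-\eta_A\mathbb{E}\hat\nabla_{\mathbf{A}}l-\eta_A\mathbf{h}_{\mathbf{A},\tau}$ for step sizes $\eta_V,\eta_A>0$, where expectations are evaluated at $(\mathbf{V}_\tau,\mathbf{A}_\tau)$. Writing $\alpha_V,\alpha_A,\boldsymbol\Delta_V,\boldsymbol\Delta_A$ for the quantities at time $\tau$, $$\alpha_{V,\tau+1}=\alpha_{V,\tau}+\eta_VK_Q(1-\alpha_A\alpha_V)\alpha_A+\eta_V\frac{1-\alpha_V}{T}-\eta_V\alpha_V\|\boldsymbol\Delta_A\|_\mu^2-\frac{\eta_V}{K_P}\langle\mathbf{h}_{\mathbf{V},\tau},\mathbf{P}\rangle_\mu,$$ $$\alpha_{A,\tau+1}=\alpha_{A,\tau}+\eta_AK_P(1-\alpha_V\alpha_A)\alpha_V-\eta_A\alpha_A\|\boldsymbol\Delta_V\|_\mu^2-\frac{\eta_A}{K_Q}\langle\mathbf{h}_{\mathbf{A},\tau},\mathbf{Q}\rangle_\m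u.$$
   Context: $\boldsymbol\mu\in\mathbb{R}^N$ is a probability vector with positive entries; $\mathbf{P}\in\mathbb{R}^{N\times N}$ has nonnegative entries, columns summing to $1$, $\mathbf{P}\boldsymbol\mu=\boldsymbol\mu$; $\mathbf{Q}=(\mathbf{q}^{(1)},\dots,\mathbf{q}^{(N)})\in\mathbb{R}^{T\times N}$ has probability-vector columns. Data: $x_1,\dots,x_{T+1}$ i.i.d. with law $\boldsymbol\mu$, $x_o$ with $\Pr(x_o=n\mid x_{T+1}=k,x_1,\dots,x_T)=\sum_tq^{(k)}_tP_{n,x_t}$; $\mathbf{X}=(\mathbf{e}_{x_1},\dots,\mathbf{e}_{x_T})$; loss $l=\frac12\|\mathbf{e}_{x_o}-\mathbf{V}\mathbf{X}\mathbf{A}\mathbf{e}_{x_{T+1}}\|^2$. Preconditioned gradients: $\hat\nabla_{\mathbf{V}}l=(\mathbf{I}_N-\mathbf{1}\mathbf{1}^\top/N)(\nabla_{\mathbf{V}}l)\operatorname{diag}(1/\boldsymbol\mu)(\mathbf{I}_N-\boldsymbol\mu\boldsymbol\mu^\top/\|\boldsymbol\mu\|^2)$; $\hat\nabla_{\mathbf{A}}l$ has columns $\frac1{\mu_k}(\mathbf{I}_T-\mathbf{1}\mathbf{1}^\top/T)\nabla_{\mathbf{a}^{(k)}}l$. $\mathbf{h}_{\mathbf{V},\tau}=\hat\nabla^{(B)}_{\mathbf{V}}l-\mathbb{E}\hat\nabla_{\mathbf{V}}l$ and $\mathbf{h}_{\mathbf{A},\tau}=\hat\nabla^{(B)}_{\mathbf{A}}l-\mathbb{E}\hat\nabla_{\mathbf{A}}l$,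 where $\hat\nabla^{(B)}$ is the average of the preconditioned gradients over a mini-batch of $B$ fresh samples at step $\tau$. $\langle\mathbf{M},\mathbf{M}'\rangle_\mu=\operatorname{Tr}(\mathbf{M}\operatorname{diag}(\boldsymbol\mu)\mathbf{M}'^\top)$, $\|\mathbf{M}\|_\mu^2=\langle\mathbf{M},\mathbf{M}\rangle_\mu$. $K_P=\|\mathbf{P}\|_\mu^2-\|\boldsymbol\mu\|^2>0$, $K_Q=\|\mathbf{Q}\|_\mu^2-1/T>0$; for any iterate, $\alpha_V=(\langle\mathbf{V},\mathbf{P}\rangle_\mu-\|\boldsymbol\mu\|^2)/K_P$, $\alpha_A=(\langle\mathbf{A},\mathbf{Q}\rangle_\mu-1/T)/K_Q$, $\boldsymbol\Delta_V=\mathbf{V}-\alpha_V\mathbf{P}-(1-\alpha_V)\boldsymbol\mu\mathbf{1}^\top$, $\boldsymbol\Delta_A=\mathbf{A}-\alpha_A\mathbf{Q}-(1-\alpha_A)\mathbf{1}\mathbf{1}^\top/T$. *)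

From HB Require Import structures.
From mathcomp Require Import all_boot all_order all_algebra.
Set Implicit Arguments. Unset Strict Implicit. Unset Printing Implicit Defensive.
Import Order.TTheory GRing.Theory Num.Theory.
Local Open Scope ring_scope.

Section Defs.
Variables (R : realFieldType) (N T : nat).

(* A sample: (x_1..x_T, x_{T+1}, x_o). *)
Definition sample := ({ffun 'I_T -> 'I_N} * 'I_N * 'I_N)%type.

Definition evec (x : 'I_N) : 'cV[R]_N := \col_i (i == x)%:R.

Definition Xmat (xs : {ffun 'I_T -> 'I_N}) : 'M[R]_(N, T) :=
  \matrix_(i < N, t < T) (i == xs t)%:R.

Definition sqnorm (mu : 'cV[R]_N) : R := \sum_i mu i 0 ^+ 2.

Definition ipmu (m : nat) (mu : 'cV[R]_N) (M M' : 'M[R]_(m, N)) : R :=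
  \tr (M *m diag_mx mu^T *m M'^T).

Definition loss (V : 'M[R]_N) (A : 'M[R]_(T, N)) (s : sample) : R :=
  let: (xs, k, o) := s in
  let r := evec o - V *m Xmat xs *m A *m evec k in
  (\sum_i r i 0 ^+ 2) / 2.

Definition resid (V : 'M[R]_N) (A : 'M[R]_(T, N)) (s : sample) : 'cV[R]_N :=
  let: (xs, k, o) := s in evec o - V *m Xmat xs *m (A *m evec k).

Definition gradV (V : 'M[R]_N) (A : 'M[R]_(T, N)) (s : sample) : 'M[R]_N :=
  let: (xs, k, o) := s in
  - (resid V A s *m (Xmat xs *m (A *m evec k))^T).

Definition gradA (V : 'M[R]_N) (A : 'M[R]_(T, N)) (s : sample) : 'M[R]_(T, N) :=
  let: (xs, k, o) := s in
  - ((Xmat xs)^T *m V^T *m resid V A s *m (evec k)^T).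

Definition precV (mu : 'cV[R]_N) (G : 'M[R]_N) : 'M[R]_N :=
  (1%:M - const_mx (N%:R^-1)) *m G *m diag_mx (\row_j (mu j 0)^-1)
    *m (1%:M - (sqnorm mu)^-1 *: (mu *m mu^T)).

Definition precA (mu : 'cV[R]_N) (G : 'M[R]_(T, N)) : 'M[R]_(T, N) :=
  \matrix_(t < T, j < N) ((mu j 0)^-1 * ((1%:M - const_mx (T%:R^-1)) *m G) t j).

Definition sprob (mu : 'cV[R]_N) (P : 'M[R]_N) (Q : 'M[R]_(T, N))
  (s : sample) : R :=
  let: (xs, k, o) := s in
  (\prod_t mu (xs t) 0) * mu k 0 * (\sum_t Q t k * P o (xs t)).

Definition EgradV mu P Q V A : 'M[R]_N :=
  \sum_(s : sample) sprob mu P Q s *: precV mu (gradV V A s).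
Definition EgradA mu P Q V A : 'M[R]_(T, N) :=
  \sum_(s : sample) sprob mu P Q s *: precA mu (gradA V A s).

Definition hV mu P Q V A (B : nat) (bs : 'I_B -> sample) : 'M[R]_N :=
  B%:R^-1 *: (\sum_b precV mu (gradV V A (bs b))) - EgradV mu P Q V A.
Definition hA mu P Q V A (B : nat) (bs : 'I_B -> sample) : 'M[R]_(T, N) :=
  B%:R^-1 *: (\sum_b precA mu (gradA V A (bs b))) - EgradA mu P Q V A.

Definition KP (mu : 'cV[R]_N) (P : 'M[R]_N) : R := ipmu mu P P - sqnorm mu.
Definition KQ (mu : 'cV[R]_N) (Q : 'M[R]_(T, N)) : R := ipmu mu Q Q - T%:R^-1.

Definition alphaV mu P (V : 'M[R]_N) : R := (ipmu mu V P - sqnorm mu) / KP mu P.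
Definition alphaA mu (Q A : 'M[R]_(T, N)) : R := (ipmu mu A Q - T%:R^-1) / KQ mu Q.

Definition DeltaV mu P (V : 'M[R]_N) : 'M[R]_N :=
  V - alphaV mu P V *: P - (1 - alphaV mu P V) *: (mu *m const_mx 1).
Definition DeltaA mu (Q A : 'M[R]_(T, N)) : 'M[R]_(T, N) :=
  A - alphaA mu Q A *: Q - (1 - alphaA mu Q A) *: const_mx (T%:R^-1).

End Defs.

From HB Require Import structures.
From mathcomp Require Import all_boot all_order all_algebra.
From mathcomp Require Import ring.
Set Implicit Arguments. Unset Strict Implicit. Unset Printing Implicit Defensive.
Import Order.TTheory GRing.Theory Num.Theory.
Local Open Scope ring_scope.

(* Both alphas are affine in the iterate, so everything reduces to
   <E grad_V, P>_mu and <E grad_A, Q>_mu.  Write D = diag mu and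
   Pi = I - mu mu^T / |mu|^2.  Paired with P (resp. Q), the preconditioned
   gradient of a sample is -x^T Y r, where r = e_o - V X a_k is the residual,
   x = X a_k and Y = D^-1 Pi D P^T (resp. x = X (Q - J/T) e_k and Y = V^T); the
   centerings drop out because P^T 1 = 1, Pi mu = 0 and Q has unit column sums.
   Averaging the target o replaces e_o by P X q_k; averaging the i.i.d. tokens
   turns X^T M X into (mu^T M mu) 11^T + cov(M) I, and the 11^T parts cancel
   since V mu = P mu = mu.  The projector Pi is invisible to cov because
   (D - mu mu^T) D^-1 Pi D = D - mu mu^T.  What remains are mu-inner products,
   and the Pythagorean identity for Delta_V and Delta_A gives the stated form. *)

Lemma mxtrace_outer (R : comRingType) m n (x : 'cV[R]_m) (y : 'cV[R]_n)
    (W : 'M_(n, m)) :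
  \tr (x *m y^T *m W) = (y^T *m W *m x) 0 0.
Proof. by rewrite -mulmxA mxtrace_mulC trace_mx11. Qed.

Lemma bilinear_formE (R : comRingType) m n (x : 'cV[R]_m) (M : 'M_(m, n))
    (y : 'cV[R]_n) :
  (x^T *m M *m y) 0 0 = \sum_i \sum_j x i 0 * M i j * y j 0.
Proof.
rewrite mxE exchange_big; apply: eq_bigr => j _; rewrite mxE mulr_suml.
by apply: eq_bigr => i _; rewrite mxE.
Qed.

Lemma sum_delta (R : ringType) (I : finType) (a : I) (F : I -> R) :
  \sum_i (i == a)%:R * F i = F a.
Proof.
by rewrite (bigD1 a) //= eqxx mul1r big1 ?addr0 // => i /negbTE->; rewrite mul0r.
Qed.

Lemma mulmx_evecE (R : realFieldType) m n (M : 'M[R]_(m, n)) k i :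
  (M *m evec R k) i 0 = M i k.
Proof. by rewrite mxE; under eq_bigr do rewrite mxE mulrC; rewrite sum_delta. Qed.

Lemma const1_mulmx_colsum (R : ringType) m n (M : 'M[R]_(m, n)) :
  (forall j, \sum_i M i j = 1) -> (const_mx 1 : 'rV_m) *m M = const_mx 1.
Proof.
move=> M1; apply/matrixP => i j; rewrite !mxE -[RHS](M1 j).
by under eq_bigr do rewrite mxE mul1r.
Qed.

Lemma colsum_const1_mulmx (R : ringType) m n (M : 'M[R]_(m, n)) :
  (const_mx 1 : 'rV_m) *m M = const_mx 1 -> forall j, \sum_i M i j = 1.
Proof.
move=> M1 j; have := congr1 (fun X : 'rV_n => X 0 j) M1; rewrite /= !mxE => <-.
by apply: eq_bigr => i _; rewrite mxE mul1r.
Qed.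

Section ProductMeasure.
Variables (R : comRingType) (N T : nat) (mu : 'cV[R]_N).
Hypothesis mu1 : \sum_i mu i 0 = 1.

Definition iid_prob (xs : {ffun 'I_T -> 'I_N}) : R := \prod_t mu (xs t) 0.

(* [diag_mx mu^T - mu *m mu^T] is the covariance matrix of the one-hot
   vector of a token drawn from mu. *)
Definition covar (Y : 'M[R]_N) : R := \tr ((diag_mx mu^T - mu *m mu^T) *m Y).

Lemma mean_prod (h : 'I_T -> 'I_N -> R) :
  \sum_xs iid_prob xs * \prod_t h t (xs t) = \prod_t \sum_j mu j 0 * h t j.
Proof.
by rewrite bigA_distr_bigA; apply: eq_bigr => xs _; rewrite -big_split.
Qed.

Lemma mean_coord_pair (t t' : 'I_T) (f g : 'I_N -> R) :
  \sum_xs iid_prob xs * (f (xs t) * g (xs t')) =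
  if t == t' then \sum_j mu j 0 * (f j * g j)
  else (\sum_j mu j 0 * f j) * (\sum_j mu j 0 * g j).
Proof.
pose h s j := (if s == t then f j else 1) * (if s == t' then g j else 1).
have prod_if (a : 'I_T) (F : 'I_T -> R) : \prod_s (if s == a then F s else 1) = F a.
  by rewrite -big_mkcond big_pred1_eq.
have -> : \sum_xs iid_prob xs * (f (xs t) * g (xs t')) =
          \sum_xs iid_prob xs * \prod_s h s (xs s).
  by apply: eq_bigr => xs _; rewrite big_split /= !prod_if.
have h_off s : s != t -> s != t' -> \sum_j mu j 0 * h s j = 1.
  by rewrite /h => /negbTE-> /negbTE->; under eq_bigr do rewrite !mulr1.
rewrite mean_prod (bigD1 t) //=; case: eqP => [tt' | /eqP ne].
  rewrite [X in _ * X]big1 ?mulr1 => [|s st]; last by rewrite h_off -?tt'.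
  by apply: eq_bigr => j _; rewrite /h -tt' eqxx.
rewrite [X in _ * X](bigD1 t') 1?eq_sym //= [X in _ * (_ * X)]big1 ?mulr1;
  last by move=> s /andP[st st']; exact: h_off.
congr (_ * _); apply: eq_bigr => j _; rewrite /h eqxx.
  by rewrite (negbTE ne) mulr1.
by rewrite eq_sym (negbTE ne) mul1r.
Qed.

Lemma mean_pair_entry (t t' : 'I_T) (Y : 'M[R]_N) :
  \sum_xs iid_prob xs * Y (xs t) (xs t') =
  (mu^T *m Y *m mu) 0 0 + (t == t')%:R * covar Y.
Proof.
have deltaE (a b : 'I_N) : Y a b = \sum_i (a == i)%:R * Y i b.
  by rewrite -[LHS](sum_delta a (fun i => Y i b)); under eq_bigr do rewrite eq_sym.
have covarE : covar Y = \sum_j mu j 0 * Y j j - (mu^T *m Y *m mu) 0 0.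
  rewrite /covar mulmxBl raddfB /= mxtrace_outer; congr (_ - _).
  by apply: eq_bigr => j _; rewrite mul_diag_mx !mxE.
under eq_bigr do rewrite deltaE mulr_sumr.
rewrite exchange_big /=.
under eq_bigr do rewrite (mean_coord_pair t t' (fun j => (j == _)%:R)).
rewrite covarE bilinear_formE; case: eqP => _.
  rewrite mul1r addrC subrK; apply: eq_bigr => i _.
  by under eq_bigr do rewrite mulrCA; rewrite sum_delta.
rewrite mul0r addr0; apply: eq_bigr => i _.
under [X in X * _]eq_bigr do rewrite mulrC; rewrite sum_delta mulr_sumr.
by apply: eq_bigr => j _; ring.
Qed.

End ProductMeasure.

Section TokenMatrix.
Variables (R : realFieldType) (N T : nat) (mu : 'cV[R]_N).
Hypothesis mu1 : \sum_i mu i 0 = 1.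

Lemma Xmat_const1 (xs : {ffun 'I_T -> 'I_N}) :
  (const_mx 1 : 'rV_N) *m Xmat R xs = const_mx 1.
Proof.
apply: const1_mulmx_colsum => t; under eq_bigr do rewrite mxE -[_%:R]mulr1.
exact: sum_delta.
Qed.

Lemma Xmat_conj (xs : {ffun 'I_T -> 'I_N}) (Y : 'M[R]_N) :
  (Xmat R xs)^T *m Y *m Xmat R xs = \matrix_(t, t') Y (xs t) (xs t').
Proof.
apply/matrixP => t t'; rewrite !mxE; under eq_bigr do rewrite !mxE mulrC.
by rewrite sum_delta; under eq_bigr do rewrite !mxE; rewrite sum_delta.
Qed.

Lemma Xmat_bilinear_form (xs : {ffun 'I_T -> 'I_N}) (c d : 'cV[R]_T)
    (Y : 'M[R]_N) :
  ((Xmat R xs *m c)^T *m Y *m (Xmat R xs *m d)) 0 0 =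
  \sum_t \sum_t' c t 0 * Y (xs t) (xs t') * d t' 0.
Proof.
have -> : (Xmat R xs *m c)^T *m Y *m (Xmat R xs *m d) =
          c^T *m ((Xmat R xs)^T *m Y *m Xmat R xs) *m d by rewrite trmx_mul !mulmxA.
by rewrite Xmat_conj bilinear_formE; under eq_bigr do under eq_bigr do rewrite mxE.
Qed.

Lemma mean_Xmat_bilinear_form (c d : 'cV[R]_T) (Y : 'M[R]_N) :
  \sum_xs iid_prob mu xs * ((Xmat R xs *m c)^T *m Y *m (Xmat R xs *m d)) 0 0 =
  (\sum_t c t 0) * (\sum_t d t 0) * (mu^T *m Y *m mu) 0 0
  + (c^T *m d) 0 0 * covar mu Y.
Proof.
transitivity (\sum_t \sum_t' c t 0 *
    ((mu^T *m Y *m mu) 0 0 + (t == t')%:R * covar mu Y) * d t' 0).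
  under eq_bigr do rewrite Xmat_bilinear_form mulr_sumr.
  rewrite exchange_big; apply: eq_bigr => t _.
  under eq_bigr do rewrite mulr_sumr.
  rewrite exchange_big; apply: eq_bigr => t' _.
  by rewrite -mean_pair_entry // mulr_sumr mulr_suml; apply: eq_bigr => xs _; ring.
have -> : (c^T *m d) 0 0 = \sum_t c t 0 * d t 0.
  by rewrite mxE; apply: eq_bigr => t _; rewrite mxE.
under eq_bigr do under eq_bigr do rewrite mulrDr mulrDl.
under eq_bigr do rewrite big_split /=.
rewrite big_split /=; congr (_ + _).
  under eq_bigr do rewrite -mulr_sumr.
  by rewrite -!mulr_suml mulrAC.
rewrite mulr_suml; apply: eq_bigr => t _.
rewrite (bigD1 t) //= eqxx big1 ?addr0 => [|t' /negbTE]; first by rewrite mul1r mulrAC.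
by rewrite eq_sym => ->; rewrite mul0r mulr0 mul0r.
Qed.

End TokenMatrix.

Section InnerProduct.
Variables (R : realFieldType) (N : nat) (mu : 'cV[R]_N).

Lemma ipmuE m (M M' : 'M[R]_(m, N)) :
  ipmu mu M M' = \sum_i \sum_j M i j * mu j 0 * M' i j.
Proof.
rewrite /ipmu /mxtrace; apply: eq_bigr => i _; rewrite !mxE.
by apply: eq_bigr => j _; rewrite mul_mx_diag !mxE.
Qed.

Lemma ipmuC m (M M' : 'M[R]_(m, N)) : ipmu mu M M' = ipmu mu M' M.
Proof. by rewrite !ipmuE; apply: eq_bigr => i _; apply: eq_bigr => j _; ring. Qed.

Lemma ipmuDl m (M1 M2 M' : 'M[R]_(m, N)) :
  ipmu mu (M1 + M2) M' = ipmu mu M1 M' + ipmu mu M2 M'.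
Proof. by rewrite /ipmu !mulmxDl mxtraceD. Qed.

Lemma ipmuZl m a (M M' : 'M[R]_(m, N)) : ipmu mu (a *: M) M' = a * ipmu mu M M'.
Proof. by rewrite /ipmu -!scalemxAl mxtraceZ. Qed.

Lemma ipmuBl m (M1 M2 M' : 'M[R]_(m, N)) :
  ipmu mu (M1 - M2) M' = ipmu mu M1 M' - ipmu mu M2 M'.
Proof. by rewrite ipmuDl -scaleN1r ipmuZl mulN1r. Qed.

Lemma ipmuZr m a (M M' : 'M[R]_(m, N)) : ipmu mu M' (a *: M) = a * ipmu mu M' M.
Proof. by rewrite ipmuC ipmuZl ipmuC. Qed.

Lemma ipmuBr m (M1 M2 M' : 'M[R]_(m, N)) :
  ipmu mu M' (M1 - M2) = ipmu mu M' M1 - ipmu mu M' M2.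
Proof. by rewrite ipmuC ipmuBl !(ipmuC M'). Qed.

Lemma ipmu_suml m (I : finType) (F : I -> 'M[R]_(m, N)) M' :
  ipmu mu (\sum_i F i) M' = \sum_i ipmu mu (F i) M'.
Proof.
elim/big_ind2: _ => // [|M1 x M2 y <- <-]; last exact: ipmuDl.
by rewrite /ipmu !mul0mx mxtrace0.
Qed.

Lemma ipmu_cols m (M M' : 'M[R]_(m, N)) :
  ipmu mu M M' = \sum_k mu k 0 * ((M *m evec R k)^T *m (M' *m evec R k)) 0 0.
Proof.
rewrite ipmuE exchange_big; apply: eq_bigr => k _; rewrite mxE mulr_sumr.
by apply: eq_bigr => i _; rewrite mxE !mulmx_evecE; ring.
Qed.

Lemma ipmu_const_mx m (M : 'M[R]_(m, N)) a :
  \sum_j mu j 0 = 1 -> (const_mx 1 : 'rV_m) *m M = const_mx 1 ->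
  ipmu mu M (const_mx a) = a.
Proof.
move=> mu1 /colsum_const1_mulmx M1.
rewrite ipmuE exchange_big -[RHS]mulr1 -mu1 mulr_sumr.
apply: eq_bigr => j _; rewrite -[RHS]mulr1 -(M1 j) !mulr_sumr.
by apply: eq_bigr => i _; rewrite mxE; ring.
Qed.

Lemma diag_mx_mu_const1 : diag_mx mu^T *m (const_mx 1 : 'cV_N) = mu.
Proof. by apply/matrixP => i j; rewrite mul_diag_mx !mxE (ord1 j) mulr1. Qed.

Lemma mu_trmx_mu : mu^T *m mu = (sqnorm mu)%:M.
Proof.
apply/matrixP => i j; rewrite (ord1 i) (ord1 j) !mxE /sqnorm.
by apply: eq_bigr => k _; rewrite mxE expr2.
Qed.

Lemma ipmu_mu_ones (M : 'M[R]_N) :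
  M *m mu = mu -> ipmu mu M (mu *m const_mx 1) = sqnorm mu.
Proof.
move=> Mmu; rewrite /ipmu trmx_mul trmx_const !mulmxA.
rewrite -[_ *m diag_mx _ *m _]mulmxA diag_mx_mu_const1 Mmu.
by rewrite mxtrace_mulC mu_trmx_mu mxtrace_scalar mulr1n.
Qed.

Lemma ipmu_affine_residual m (X Y Z : 'M[R]_(m, N)) c a :
  ipmu mu X Z = c -> ipmu mu Y Z = c -> ipmu mu Z Z = c ->
  ipmu mu X Y - c = a * (ipmu mu Y Y - c) ->
  let D := X - a *: Y - (1 - a) *: Z in
  ipmu mu D D = ipmu mu X X - c - a ^+ 2 * (ipmu mu Y Y - c).
Proof.
move=> XZ YZ ZZ XY D; rewrite /D !ipmuBl !ipmuBr !ipmuZl !ipmuZr.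
rewrite !(ipmuC Y X) !(ipmuC Z X) !(ipmuC Z Y) XZ YZ ZZ.
have -> : ipmu mu X Y = a * (ipmu mu Y Y - c) + c by rewrite -XY subrK.
ring.
Qed.

End InnerProduct.

Section Preconditioners.
Variables (R : realFieldType) (N T : nat) (mu : 'cV[R]_N) (P : 'M[R]_N).
Hypotheses (mu_gt0 : forall i, 0 < mu i 0) (mu1 : \sum_i mu i 0 = 1)
  (P1 : (const_mx 1 : 'rV_N) *m P = const_mx 1).

Local Notation Dmu := (diag_mx mu^T).
Local Notation Dmu_inv := (diag_mx (\row_j (mu j 0)^-1)).
Local Notation proj_mu := (1%:M - (sqnorm mu)^-1 *: (mu *m mu^T)).

Lemma const1_mu : (const_mx 1 : 'rV_N) *m mu = 1%:M.
Proof.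
apply/matrixP => i j; rewrite (ord1 i) (ord1 j) !mxE eqxx -[RHS]mu1.
by apply: eq_bigr => k _; rewrite mxE mul1r.
Qed.

Lemma sqnorm_neq0 : sqnorm mu != 0.
Proof.
apply/eqP => /(psumr_eq0P (fun i _ => sqr_ge0 (mu i 0))) mu0.
move/eqP: mu1; rewrite big1 ?(eq_sym 0) ?oner_eq0 // => i _.
by apply/eqP; rewrite -sqrf_eq0 mu0.
Qed.

Lemma proj_mu_mu : proj_mu *m mu = 0.
Proof.
rewrite mulmxBl mul1mx -scalemxAl -mulmxA mu_trmx_mu mul_mx_scalar scalerA.
by rewrite mulVf ?sqnorm_neq0 // scale1r subrr.
Qed.

Lemma Dmu_Dmu_inv : Dmu *m Dmu_inv = 1%:M.
Proof.
rewrite mulmx_diag -diag_const_mx; congr diag_mx.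
by apply/matrixP => i j; rewrite !mxE mulfV ?gt_eqF.
Qed.

Lemma mu_Dmu_inv : mu^T *m Dmu_inv = const_mx 1.
Proof.
by apply/matrixP => i j; rewrite (ord1 i) mul_mx_diag !mxE mulfV ?gt_eqF.
Qed.

Definition precV_repr : 'M[R]_N := Dmu_inv *m proj_mu *m Dmu *m P^T.

Lemma precV_repr_const (a : R) : precV_repr *m (const_mx a : 'M_N) = 0.
Proof.
have -> : (const_mx a : 'M_N) = (const_mx 1 : 'cV_N) *m (const_mx a : 'rV_N).
  by apply/matrixP => i j; rewrite !mxE big_ord1 !mxE mul1r.
have PT1 : P^T *m (const_mx 1 : 'cV_N) = const_mx 1.
  by rewrite -[RHS](trmx_const 1 N) -P1 trmx_mul trmx_const.
rewrite /precV_repr !mulmxA -[_ *m P^T *m _]mulmxA PT1.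
rewrite -[_ *m Dmu *m _]mulmxA diag_mx_mu_const1 -[_ *m proj_mu *m _]mulmxA.
by rewrite proj_mu_mu !(mulmx0, mul0mx).
Qed.

Lemma ipmu_precV (G : 'M[R]_N) : ipmu mu (precV mu G) P = \tr (G *m precV_repr).
Proof.
rewrite /ipmu /precV -!mulmxA mxtrace_mulC -!mulmxA.
have <- : precV_repr *m (1%:M - const_mx N%:R^-1) = precV_repr.
  by rewrite mulmxBr mulmx1 precV_repr_const subr0.
by rewrite /precV_repr !mulmxA.
Qed.

Lemma covar_precV_repr (M : 'M[R]_N) :
  covar mu (precV_repr *m M) = covar mu (P^T *m M).
Proof.
have const1_Dmu : (const_mx 1 : 'rV_N) *m Dmu = mu^T.
  by apply/matrixP => i j; rewrite (ord1 i) mul_mx_diag !mxE mul1r.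
have center_mu : (1%:M - mu *m const_mx 1) *m mu = 0.
  by rewrite mulmxBl mul1mx -mulmxA const1_mu mulmx1 subrr.
have covar_proj : (Dmu - mu *m mu^T) *m Dmu_inv *m proj_mu *m Dmu = Dmu - mu *m mu^T.
  rewrite mulmxBl Dmu_Dmu_inv -[mu *m _ *m _]mulmxA mu_Dmu_inv.
  rewrite mulmxBr mulmx1 -scalemxAr mulmxA center_mu mul0mx scaler0 subr0.
  by rewrite mulmxBl mul1mx -mulmxA const1_Dmu.
by rewrite /covar /precV_repr !mulmxA covar_proj.
Qed.

Lemma covar_trmx_mul (M1 M2 : 'M[R]_N) : M1 *m mu = mu -> M2 *m mu = mu ->
  covar mu (M1^T *m M2) = ipmu mu M2 M1 - sqnorm mu.
Proof.
move=> M1mu M2mu; rewrite /covar mulmxBl raddfB /= mxtrace_outer.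
rewrite (mulmxA mu^T) -trmx_mul M1mu -mulmxA M2mu mu_trmx_mu mxE mulr1n.
by rewrite /ipmu mulmxA mxtrace_mulC mulmxA.
Qed.

Lemma precA_Dmu (G : 'M[R]_(T, N)) :
  precA mu G *m Dmu = (1%:M - const_mx T%:R^-1) *m G.
Proof.
by apply/matrixP => t j; rewrite mul_mx_diag !mxE mulrAC mulVf ?gt_eqF // mul1r.
Qed.

Lemma ipmu_precA (G M : 'M[R]_(T, N)) : (const_mx 1 : 'rV_T) *m M = const_mx 1 ->
  ipmu mu (precA mu G) M = \tr (G *m (M - const_mx T%:R^-1)^T).
Proof.
move=> /colsum_const1_mulmx M1; rewrite /ipmu precA_Dmu -mulmxA mxtrace_mulC -mulmxA.
have -> : M^T *m (1%:M - const_mx T%:R^-1) = ((1%:M - const_mx T%:R^-1) *m M)^T.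
  by rewrite trmx_mul [(_ - _)^T]raddfB /= trmx1 trmx_const.
rewrite mulmxBl mul1mx; congr (\tr (G *m (M - _)^T)).
apply/matrixP => i j; rewrite !mxE; under eq_bigr do rewrite mxE.
by rewrite -mulr_sumr M1 mulr1.
Qed.

End Preconditioners.

Section Expectations.
Variables (R : realFieldType) (N T : nat) (mu : 'cV[R]_N) (P V : 'M[R]_N)
  (Q A : 'M[R]_(T, N)).
Hypotheses (mu_gt0 : forall i, 0 < mu i 0) (mu1 : \sum_i mu i 0 = 1)
  (P1 : (const_mx 1 : 'rV_N) *m P = const_mx 1) (Pmu : P *m mu = mu)
  (Q1 : (const_mx 1 : 'rV_T) *m Q = const_mx 1)
  (A1 : (const_mx 1 : 'rV_T) *m A = const_mx 1) (Vmu : V *m mu = mu).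

Definition resid_pairing (C : 'M[R]_(T, N)) (Y : 'M[R]_N) (s : sample N T) : R :=
  let: (xs, k, o) := s in
  - ((Xmat R xs *m (C *m evec R k))^T *m Y *m resid V A s) 0 0.

Lemma ipmu_precV_gradV (s : sample N T) :
  ipmu mu (precV mu (gradV V A s)) P = resid_pairing A (precV_repr mu P) s.
Proof.
by case: s => [[xs k] o]; rewrite (ipmu_precV mu1 P1) mulNmx raddfN /= mxtrace_outer.
Qed.

Lemma ipmu_precA_gradA (s : sample N T) :
  ipmu mu (precA mu (gradA V A s)) Q = resid_pairing (Q - const_mx T%:R^-1) V^T s.
Proof.
case: s => [[xs k] o]; rewrite (ipmu_precA mu_gt0 _ Q1) mulNmx raddfN /= mxtrace_outer.
by rewrite !trmx_mul !mulmxA.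
Qed.

Lemma sum_sample (F : sample N T -> R) :
  \sum_s F s = \sum_xs \sum_k \sum_o F (xs, k, o).
Proof.
transitivity (\sum_p \sum_o F (p, o)).
  by rewrite pair_bigA; apply: eq_bigr => -[].
by rewrite [RHS]pair_bigA; apply: eq_bigr => -[].
Qed.

Lemma sprobE (xs : {ffun 'I_T -> 'I_N}) k o :
  sprob mu P Q (xs, k, o) =
  iid_prob mu xs * mu k 0 * (P *m (Xmat R xs *m (Q *m evec R k))) o 0.
Proof.
rewrite /sprob mxE; congr (_ * _); under [RHS]eq_bigr do rewrite mxE mulr_sumr.
rewrite exchange_big; apply: eq_bigr => t _ /=.
under eq_bigr do rewrite mxE mulmx_evecE mulrCA.
by rewrite sum_delta mulrC.
Qed.

Lemma sum_next_token (xs : {ffun 'I_T -> 'I_N}) k :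
  \sum_o (P *m (Xmat R xs *m (Q *m evec R k))) o 0 = 1.
Proof.
apply: colsum_const1_mulmx; rewrite !mulmxA P1 Xmat_const1 Q1.
by apply/matrixP => i j; rewrite (ord1 j) mulmx_evecE !mxE.
Qed.

Lemma mean_next_token (C : 'M[R]_(T, N)) (Y : 'M[R]_N) xs k :
  let x := Xmat R xs *m (C *m evec R k) in
  \sum_o sprob mu P Q (xs, k, o) * resid_pairing C Y (xs, k, o) =
  iid_prob mu xs * mu k 0 *
  ((x^T *m (Y *m V) *m (Xmat R xs *m (A *m evec R k))) 0 0
   - (x^T *m (Y *m P) *m (Xmat R xs *m (Q *m evec R k))) 0 0).
Proof.
move=> x; set u := Xmat R xs *m (A *m evec R k).
pose p := P *m (Xmat R xs *m (Q *m evec R k)).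
have pairingE o :
    resid_pairing C Y (xs, k, o) = (x^T *m (Y *m V) *m u) 0 0 - (x^T *m Y) 0 o.
  have entryB (M1 M2 : 'M[R]_1) : (M1 - M2) 0 0 = M1 0 0 - M2 0 0 by rewrite !mxE.
  by rewrite /resid_pairing /resid -/x mulmxBr entryB mulmx_evecE opprB !mulmxA.
have -> : x^T *m (Y *m P) *m (Xmat R xs *m (Q *m evec R k)) = x^T *m Y *m p.
  by rewrite /p !mulmxA.
rewrite [(_ *m p) 0 0]mxE -[X in _ * (X - _)]mulr1 -(sum_next_token xs k) -/p.
rewrite mulr_sumr -sumrB mulr_sumr.
by apply: eq_bigr => o _; rewrite sprobE pairingE; ring.
Qed.

Lemma mean_resid_pairing (C : 'M[R]_(T, N)) (Y : 'M[R]_N) :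
  \sum_s sprob mu P Q s * resid_pairing C Y s =
  covar mu (Y *m V) * ipmu mu C A - covar mu (Y *m P) * ipmu mu C Q.
Proof.
have col_sum1 (M : 'M[R]_(T, N)) k : (const_mx 1 : 'rV_T) *m M = const_mx 1 ->
    \sum_t (M *m evec R k) t 0 = 1.
  move=> /colsum_const1_mulmx M1.
  by under eq_bigr do rewrite mulmx_evecE; exact: M1.
have mean_YV_YP : (mu^T *m (Y *m V) *m mu) 0 0 = (mu^T *m (Y *m P) *m mu) 0 0.
  by rewrite -!mulmxA Vmu Pmu.
rewrite sum_sample; under eq_bigr do under eq_bigr do rewrite mean_next_token.
rewrite exchange_big !ipmu_cols !mulr_sumr -sumrB; apply: eq_bigr => k _ /=.
pose F (M : 'M[R]_(T, N)) (Z : 'M[R]_N) (xs : {ffun 'I_T -> 'I_N}) :=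
  ((Xmat R xs *m (C *m evec R k))^T *m Z *m (Xmat R xs *m (M *m evec R k))) 0 0.
transitivity (mu k 0 * (\sum_xs iid_prob mu xs * F A (Y *m V) xs
                        - \sum_xs iid_prob mu xs * F Q (Y *m P) xs)).
  by rewrite -sumrB mulr_sumr; apply: eq_bigr => xs _; rewrite /F; ring.
rewrite /F !(mean_Xmat_bilinear_form mu1) (col_sum1 A) // (col_sum1 Q) //.
by rewrite mean_YV_YP; ring.
Qed.

Lemma ipmu_EgradV_P : ipmu mu (EgradV mu P Q V A) P =
  ipmu mu A A * (ipmu mu V P - sqnorm mu) - ipmu mu A Q * KP mu P.
Proof.
rewrite /EgradV ipmu_suml.
under eq_bigr do rewrite ipmuZl ipmu_precV_gradV.
rewrite mean_resid_pairing // !covar_precV_repr // !covar_trmx_mul // /KP.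
by rewrite mulrC [X in _ - X]mulrC.
Qed.

Lemma ipmu_EgradA_Q : ipmu mu (EgradA mu P Q V A) Q =
  (ipmu mu A Q - T%:R^-1) * (ipmu mu V V - sqnorm mu)
  - KQ mu Q * (ipmu mu V P - sqnorm mu).
Proof.
rewrite /EgradA ipmu_suml.
under eq_bigr do rewrite ipmuZl ipmu_precA_gradA.
rewrite mean_resid_pairing // !covar_trmx_mul // !ipmuBl (ipmuC _ A).
rewrite !(ipmuC _ (const_mx _)) !ipmu_const_mx // /KQ (ipmuC _ P V).
by rewrite mulrC [X in _ - X]mulrC.
Qed.

Lemma natr_T_neq0 : T%:R != 0 :> R.
Proof.
(* For T = 0 the sum defining <Q, 1>_mu = 1 would be empty. *)
rewrite pnatr_eq0; apply/eqP => T0; have := ipmu_const_mx 1 mu1 Q1.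
rewrite ipmuE big1 => [/eqP|[t ltT] _]; first by rewrite eq_sym oner_eq0.
by exfalso; move: ltT; rewrite T0.
Qed.

Lemma ipmu_DeltaV : KP mu P != 0 ->
  ipmu mu (DeltaV mu P V) (DeltaV mu P V) =
  ipmu mu V V - sqnorm mu - alphaV mu P V ^+ 2 * KP mu P.
Proof.
move=> KP0; apply: ipmu_affine_residual; rewrite ?ipmu_mu_ones //.
  by rewrite -mulmxA const1_mu // mulmx1.
by rewrite /alphaV divfK.
Qed.

Lemma ipmu_DeltaA : KQ mu Q != 0 ->
  ipmu mu (DeltaA mu Q A) (DeltaA mu Q A) =
  ipmu mu A A - T%:R^-1 - alphaA mu Q A ^+ 2 * KQ mu Q.
Proof.
move=> KQ0; apply: ipmu_affine_residual; rewrite ?ipmu_const_mx //.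
  apply: const1_mulmx_colsum => j; under eq_bigr do rewrite mxE.
  by rewrite sumr_const card_ord -[LHS]mulr_natr mulVf // natr_T_neq0.
by rewrite /alphaA divfK.
Qed.

End Expectations.

Lemma alphaV_subr (R : realFieldType) N (mu : 'cV[R]_N) (P V E : 'M[R]_N) :
  alphaV mu P (V - E) = alphaV mu P V - ipmu mu E P / KP mu P.
Proof. by rewrite /alphaV ipmuBl; ring. Qed.

Lemma alphaA_subr (R : realFieldType) N T (mu : 'cV[R]_N) (Q A E : 'M[R]_(T, N)) :
  alphaA mu Q (A - E) = alphaA mu Q A - ipmu mu E Q / KQ mu Q.
Proof. by rewrite /alphaA ipmuBl; ring. Qed.

Theorem lemmaC5 (R : realFieldType) (N T : nat)
  (mu : 'cV[R]_N) (P : 'M[R]_N) (Q : 'M[R]_(T, N))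
  (Vt : 'M[R]_N) (At : 'M[R]_(T, N)) (etaV etaA : R)
  (B : nat) (bs : 'I_B -> sample N T) :
  (* mu : probability vector with positive entries *)
  (forall i, 0 < mu i 0) -> \sum_i mu i 0 = 1 ->
  (* P : nonnegative, column-stochastic, P mu = mu *)
  (forall i j, 0 <= P i j) -> (forall j, \sum_i P i j = 1) -> P *m mu = mu ->
  (* Q : columns are probability vectors *)
  (forall t k, 0 <= Q t k) -> (forall k, \sum_t Q t k = 1) ->
  0 < KP mu P -> 0 < KQ mu Q ->
  (* mini-batch of B >= 1 samples *)
  (0 < B)%N ->
  (* constraints on the current iterate *)
  (const_mx 1 : 'rV[R]_N) *m Vt = const_mx 1 ->
  (const_mx 1 : 'rV[R]_T) *m At = const_mx 1 ->
  Vt *m mu = mu ->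
  0 < etaV -> 0 < etaA ->
  let EV := EgradV mu P Q Vt At in
  let EA := EgradA mu P Q Vt At in
  let hVt := hV mu P Q Vt At bs in
  let hAt := hA mu P Q Vt At bs in
  let V1 := Vt - etaV *: EV - etaV *: hVt in
  let A1 := At - etaA *: EA - etaA *: hAt in
  let aV := alphaV mu P Vt in
  let aA := alphaA mu Q At in
  alphaV mu P V1 =
    aV + etaV * KQ mu Q * (1 - aA * aV) * aA + etaV * ((1 - aV) / T%:R)
    - etaV * aV * ipmu mu (DeltaA mu Q At) (DeltaA mu Q At)
    - etaV / KP mu P * ipmu mu hVt P
  /\
  alphaA mu Q A1 =
    aA + etaA * KP mu P * (1 - aV * aA) * aV
    - etaA * aA * ipmu mu (DeltaV mu P Vt) (DeltaV mu P Vt)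
    - etaA / KQ mu Q * ipmu mu hAt Q.
Proof.
move=> mu_gt0 mu1 _ /const1_mulmx_colsum P1 Pmu _ /const1_mulmx_colsum Q1.
move=> KP_gt0 KQ_gt0 _ _ A1 Vmu _ _ EV EA hVt hAt V1 A1' aV aA.
have [KP0 KQ0] : KP mu P != 0 /\ KQ mu Q != 0 by rewrite !gt_eqF.
have VP : ipmu mu Vt P - sqnorm mu = aV * KP mu P by rewrite /aV /alphaV divfK.
have AQ : ipmu mu At Q = aA * KQ mu Q + T%:R^-1 by rewrite /aA /alphaA divfK // subrK.
split.
  rewrite /V1 !alphaV_subr !ipmuZl ipmu_EgradV_P // ipmu_DeltaA // VP AQ -/aV -/aA.
  by field; rewrite KP0 (natr_T_neq0 mu1 Q1).
rewrite /A1' !alphaA_subr !ipmuZl ipmu_EgradA_Q // ipmu_DeltaV // VP AQ addrK -/aV -/aA.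
by field; rewrite KQ0.
Qed.
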